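(* Let $s,t,r>1$ be integers and let $G=C_s * C_t$ be the free product of cyclic groups of orders $s$ and $t$. For every $w\in G$, the normal closure of $w^r$ in $G$ is a proper subgroup of $G$. *)

From Stdlib Require Import Arith.

Record group := Group {
  gcar :> Type;
  gmul : gcar -> gcar -> gcar;
  gone : gcar;
  ginv : gcar -> gcar;
  gmulA : forall x y z, gmul x (gmul y z) = gmul (gmul x y) z;
  gmul1g : forall x, gmul gone x = x;
  gmulVg : forall x, gmul (ginv x) x = gone
}.

Arguments gmul {g}.
Arguments gone {g}.
Arguments ginv {g}.

Fixpoint gpow {G : group} (x : G) (n : nat) : G :=
  match n with
  | O => gone
  | S k => gmul x (gpow x k)
  end.

Definition is_hom (G H : group) (f : G -> H) : Prop :=
  forall x y : G, f (gmul x y) = gmul (f x) (f y).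

Definition is_normal_subgroup (G : group) (N : G -> Prop) : Prop :=
  N gone /\
  (forall x y, N x -> N y -> N (gmul x y)) /\
  (forall x, N x -> N (ginv x)) /\
  (forall g x, N x -> N (gmul (ginv g) (gmul x g))).

Definition normal_closure (G : group) (x : G) : G -> Prop :=
  fun z => forall N : G -> Prop, is_normal_subgroup G N -> N x -> N z.

(* (G, a, b) is the free product C_s * C_t, i.e. G = < a, b | a^s, b^t >,
   characterised by its universal property: a^s = 1, b^t = 1, and for every
   group H and x, y in H with x^s = 1, y^t = 1 there is a unique
   homomorphism G -> H sending a to x and b to y. *)
Definition is_free_product_cyclic (s t : nat) (G : group) (a b : G) : Prop :=
  gpow a s = gone /\ gpow b t = gone /\
  forall (H : group) (x y : H), gpow x s = gone -> gpow y t = gone ->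
    (exists f : G -> H, is_hom G H f /\ f a = x /\ f b = y) /\
    (forall f g : G -> H, is_hom G H f -> is_hom G H g ->
       f a = x -> f b = y -> g a = x -> g b = y -> forall z, f z = g z).

(* Up to conjugation, w is a power of a, a power of b, or a reduced alternating
   word u = a^i1 b^j1 ... a^in b^jn (n >= 1, 0 < ik < s, 0 < jk < t).  In each case
   there is a representation rho : G -> GL_2(C) with rho(w)^r scalar but rho(a) or
   rho(b) not scalar, so the preimage of the scalar matrices is a normal subgroup
   containing w^r but not all of G.  For the alternating word take
   rho(a) = [[1,1],[0,lam]] and rho(b) = [[mu,0],[x,1]] with lam, mu primitive s-th
   and t-th roots of unity: det rho(u) does not depend on x, while tr rho(u) is a
   polynomial of degree n in x.  Hence x can be chosen so that the eigenvalues of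
   rho(u) are e and zeta e for a primitive r-th root of unity zeta, and then
   rho(u)^r = e^r. *)

From mathcomp Require Import all_boot all_order all_algebra ring algC cyclotomic.
From Stdlib Require Import ProofIrrelevance.

Set Implicit Arguments.
Unset Strict Implicit.
Unset Printing Implicit Defensive.

Arguments gmulA {g}.
Arguments gmul1g {g}.
Arguments gmulVg {g}.

Section GroupFacts.

Variable G : group.
Implicit Types x y g : G.

Lemma gmulgV x : gmul x (ginv x) = gone.
Proof.
rewrite -[gmul x (ginv x)]gmul1g -{1}(gmulVg (ginv x)).
by rewrite -gmulA [gmul (ginv x) (gmul x _)]gmulA gmulVg gmul1g gmulVg.
Qed.

Lemma gmulg1 x : gmul x gone = x.
Proof. by rewrite -(gmulVg x) gmulA gmulgV gmul1g. Qed.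

Lemma ginv_uniq x y : gmul x y = gone -> y = ginv x.
Proof. by move=> xy1; rewrite -[y]gmul1g -(gmulVg x) -gmulA xy1 gmulg1. Qed.

Lemma ginvK x : ginv (ginv x) = x.
Proof. by symmetry; apply: ginv_uniq; apply: gmulVg. Qed.

Lemma ginvM x y : ginv (gmul x y) = gmul (ginv y) (ginv x).
Proof.
by symmetry; apply: ginv_uniq; rewrite -gmulA [gmul y _]gmulA gmulgV gmul1g gmulgV.
Qed.

Lemma ginv1 : ginv (@gone G) = gone.
Proof. by symmetry; apply: ginv_uniq; apply: gmul1g. Qed.

Lemma gpowD x m n : gpow x (m + n) = gmul (gpow x m) (gpow x n).
Proof. by elim: m => [|m IHm] /=; rewrite ?gmul1g // IHm gmulA. Qed.

Lemma gpow1n n : gpow (@gone G) n = gone.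
Proof. by elim: n => //= n ->; rewrite gmul1g. Qed.

Lemma gpowM x m n : gpow x (m * n) = gpow (gpow x m) n.
Proof. by elim: n => [|n IHn]; rewrite ?muln0 // mulnS gpowD IHn. Qed.

Lemma gpow_modn x m n : gpow x m = gone -> gpow x n = gpow x (n %% m).
Proof. by move=> xm1; rewrite {1}(divn_eq n m) gpowD mulnC gpowM xm1 gpow1n gmul1g. Qed.

Lemma ginv_gpow x m n : 0 < m -> gpow x m = gone ->
  ginv (gpow x n) = gpow x (n * m.-1).
Proof.
move=> m_gt0 xm1; symmetry; apply: ginv_uniq.
by rewrite -gpowD -{1}[n]muln1 -mulnDr add1n prednK // mulnC gpowM xm1 gpow1n.
Qed.

Definition conjugate x y := exists g, x = gmul g (gmul y (ginv g)).

Lemma conjugate_refl x : conjugate x x.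
Proof. by exists gone; rewrite ginv1 gmulg1 gmul1g. Qed.

Lemma conjugate_trans x y z : conjugate x y -> conjugate y z -> conjugate x z.
Proof.
move=> [g ->] [h ->]; exists (gmul g h).
by rewrite ginvM !gmulA.
Qed.

Lemma conjugate_gpow x y n : conjugate x y -> conjugate (gpow x n) (gpow y n).
Proof.
move=> [g ->]; exists g; elim: n => [|n IHn] /=; first by rewrite gmul1g gmulgV.
by rewrite IHn !gmulA -[gmul (gmul (gmul g y) (ginv g)) g]gmulA gmulVg gmulg1 -!gmulA.
Qed.

End GroupFacts.

Section Homomorphisms.

Variables (G H : group) (f : G -> H).
Hypothesis f_hom : is_hom G H f.

Lemma hom1 : f gone = gone.
Proof.
have ff : gmul (f gone) (f gone) = f gone by rewrite -f_hom gmul1g.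
by rewrite -[f gone]gmul1g -(gmulVg (f gone)) -gmulA ff.
Qed.

Lemma homV x : f (ginv x) = ginv (f x).
Proof. by apply: ginv_uniq; rewrite -f_hom gmulgV hom1. Qed.

Lemma homX x n : f (gpow x n) = gpow (f x) n.
Proof. by elim: n => [|n IHn] /=; rewrite ?hom1 // f_hom IHn. Qed.

End Homomorphisms.

Section Subgroup.

Variables (G : group) (P : G -> Prop).
Hypotheses (P1 : P gone) (PM : forall x y, P x -> P y -> P (gmul x y))
  (PV : forall x, P x -> P (ginv x)).

Let sub_eq (x y : {x | P x}) : proj1_sig x = proj1_sig y -> x = y.
Proof. by apply: eq_sig_hprop => ? ? ?; apply: proof_irrelevance. Qed.

Definition subgroup : group.
refine (@Group {x | P x}
  (fun x y => exist _ (gmul (proj1_sig x) (proj1_sig y)) (PM (proj2_sig x) (proj2_sig y)))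
  (exist _ gone P1) (fun x => exist _ (ginv (proj1_sig x)) (PV (proj2_sig x))) _ _ _).
- by move=> x y z; apply: sub_eq; apply: gmulA.
- by move=> x; apply: sub_eq; apply: gmul1g.
- by move=> x; apply: sub_eq; apply: gmulVg.
Defined.

Lemma subgroup_inj (x y : subgroup) : proj1_sig x = proj1_sig y -> x = y.
Proof. exact: sub_eq. Qed.

Lemma subgroup_gpow (x : subgroup) n : proj1_sig (gpow x n) = gpow (proj1_sig x) n.
Proof. by elim: n => //= n ->. Qed.

End Subgroup.

(* Restrict the universal map to the subgroup generated by [a] and [b];
   uniqueness makes it a retraction of [G] onto that subgroup. *)
Lemma free_product_cyclic_ind s t (G : group) (a b : G) (P : G -> Prop) :
  is_free_product_cyclic s t G a b ->
  P gone -> (forall x y, P x -> P y -> P (gmul x y)) -> (forall x, P x -> P (ginv x)) ->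
  P a -> P b -> forall z, P z.
Proof.
move=> [as1 [bt1 univ]] P1 PM PV Pa Pb.
pose a' : subgroup P1 PM PV := exist _ a Pa.
pose b' : subgroup P1 PM PV := exist _ b Pb.
have a's1 : gpow a' s = gone by apply: subgroup_inj; rewrite subgroup_gpow.
have b't1 : gpow b' t = gone by apply: subgroup_inj; rewrite subgroup_gpow.
have [[f [f_hom [fa fb]]] _] := univ _ a' b' a's1 b't1.
have [_ uniq] := univ G a b as1 bt1.
have retr z : proj1_sig (f z) = z.
  apply: (uniq (fun z => proj1_sig (f z)) id) => //.
  - by move=> x y; rewrite f_hom.
  - by rewrite fa.
  - by rewrite fb.
by move=> z; rewrite -(retr z); apply: proj2_sig.
Qed.

(** * Conjugacy normal form in C_s * C_t *)

Section AlternatingWords.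

Variables (G : group) (a b : G).

Fixpoint alt_word (p : seq (nat * nat)) : G :=
  if p is (i, j) :: p' then gmul (gpow a i) (gmul (gpow b j) (alt_word p')) else gone.

Lemma alt_word_cat p q : alt_word (p ++ q) = gmul (alt_word p) (alt_word q).
Proof. by elim: p => [|[i j] p IHp] /=; rewrite ?gmul1g // IHp !gmulA. Qed.

Lemma alt_word_rot n p : conjugate (alt_word p) (alt_word (rot n p)).
Proof.
exists (alt_word (take n p)).
by rewrite -{1}(cat_take_drop n p) /rot !alt_word_cat !gmulA -[RHS]gmulA gmulgV gmulg1.
Qed.

Lemma alt_word_merge_a i i' j q :
  alt_word ((i, 0) :: (i', j) :: q) = alt_word ((i + i', j) :: q).
Proof. by rewrite /= gmul1g gpowD !gmulA. Qed.

Lemma alt_word_merge_b j q :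
  conjugate (alt_word ((0, j) :: q)) (gmul (alt_word q) (gpow b j)).
Proof.
by exists (gpow b j); rewrite /= gmul1g -!gmulA gmulgV gmulg1.
Qed.

Lemma alt_word_rcons_b q i j j' :
  gmul (alt_word (rcons q (i, j))) (gpow b j') = alt_word (rcons q (i, j + j')).
Proof.
by rewrite -!cats1 !alt_word_cat -gmulA /= !gmulg1 gpowD -gmulA.
Qed.

Variables s t : nat.
Hypotheses (s_gt0 : 0 < s) (t_gt0 : 0 < t).
Hypotheses (as1 : gpow a s = gone) (bt1 : gpow b t = gone).

Definition mod_pairs (p : seq (nat * nat)) := [seq (ij.1 %% s, ij.2 %% t) | ij <- p].

Lemma alt_word_mod_pairs p : alt_word p = alt_word (mod_pairs p).
Proof. by elim: p => [|[i j] p IHp] //=; rewrite IHp -(gpow_modn i as1) -(gpow_modn j bt1). Qed.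

Lemma ginv_alt_word p : exists q, ginv (alt_word p) = alt_word q.
Proof.
elim: p => [|[i j] p [q IHq]] /=; first by exists [::]; rewrite ginv1.
exists (q ++ [:: (0, j * t.-1); (i * s.-1, 0)]).
rewrite !ginvM IHq alt_word_cat /= gmul1g !gmulg1.
by rewrite (ginv_gpow _ t_gt0) // (ginv_gpow _ s_gt0) // gmulA.
Qed.

End AlternatingWords.

Definition reduced_pairs s t (p : seq (nat * nat)) :=
  all (fun ij => (0 < ij.1 < s) && (0 < ij.2 < t)) p.

Section NormalForm.

Variables (s t : nat) (G : group) (a b : G).
Hypotheses (s_gt0 : 0 < s) (t_gt0 : 0 < t).
Hypothesis freeG : is_free_product_cyclic s t G a b.

Let as1 : gpow a s = gone. Proof. by case: freeG. Qed.
Let bt1 : gpow b t = gone. Proof. by case: freeG => _ []. Qed.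

Lemma alt_word_surj z : exists p, z = alt_word a b p.
Proof.
apply: (free_product_cyclic_ind (P := fun z => exists p, z = alt_word a b p) freeG).
- by exists [::].
- by move=> x y [p ->] [q ->]; exists (p ++ q); rewrite alt_word_cat.
- by move=> x [p ->]; apply: (ginv_alt_word s_gt0 t_gt0 as1 bt1).
- by exists [:: (1, 0)]; rewrite /= !gmulg1.
- by exists [:: (0, 1)]; rewrite /= gmul1g !gmulg1.
Qed.

Definition conj_normal_form (w : G) :=
  [\/ exists i, conjugate w (gpow a i), exists j, conjugate w (gpow b j)
    | exists p, [/\ p != [::], reduced_pairs s t p & conjugate w (alt_word a b p)]].

Lemma conj_normal_form_conjugate w w' :
  conjugate w w' -> conj_normal_form w' -> conj_normal_form w.
Proof.
move=> ww' [[i ?]|[j ?]|[p [? ? ?]]].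
- by apply: Or31; exists i; apply: conjugate_trans ww' _.
- by apply: Or32; exists j; apply: conjugate_trans ww' _.
- by apply: Or33; exists p; split=> //; apply: conjugate_trans ww' _.
Qed.

Lemma alt_word_conj_normal_form p : conj_normal_form (alt_word a b p).
Proof.
move: {2}(size p) (leqnn (size p)) => n; elim: n p => [|n IHn] p le_pn.
  by case: p le_pn => // _; apply: Or31; exists 0; apply: conjugate_refl.
rewrite (alt_word_mod_pairs as1 bt1); set p' := mod_pairs s t p.
have le_p'n : size p' <= n.+1 by rewrite size_map.
have IHrot q : size q <= n -> conjugate (alt_word a b p') (alt_word a b q) ->
    conj_normal_form (alt_word a b p').
  by move=> le_qn pq; apply: conj_normal_form_conjugate pq (IHn q le_qn).
case: (boolP (reduced_pairs s t p')) => [red | /allPn [[i j] ij_in nred]].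
  have [-> | p'_nil] := eqVneq p' [::]; first by apply: Or31; exists 0; apply: conjugate_refl.
  by apply: Or33; exists p'; split=> //; apply: conjugate_refl.
have /andP [lt_is lt_jt] : (i < s) && (j < t).
  by case/mapP: ij_in => [[x y] _ [-> ->]]; rewrite !ltn_pmod.
have [k q rot_p'] := rot_to ij_in.
have p'_ijq : conjugate (alt_word a b p') (alt_word a b ((i, j) :: q)).
  by rewrite -rot_p'; apply: alt_word_rot.
have {k rot_p'} le_qn : size q <= n.
  by rewrite -ltnS -[(size q).+1]/(size ((i, j) :: q)) -rot_p' size_rot.
have [i0 | j0] : i = 0 \/ j = 0.
  case: (posnP i) => [|i_gt0]; [by left | right].
  by move: nred; rewrite /= i_gt0 lt_is lt_jt !andbT andTb lt0n negbK => /eqP.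
- subst i; have {}p'_ijq := conjugate_trans p'_ijq (alt_word_merge_b _ _ _ q).
  case/lastP: q le_qn p'_ijq => [|q [i' j']] le_qn p'_ijq.
    by apply: Or32; exists j; rewrite /= gmul1g in p'_ijq.
  apply: IHrot (rcons q (i', j' + j)) _ _; first by rewrite !size_rcons in le_qn *.
  by rewrite -alt_word_rcons_b.
- subst j; case: q le_qn p'_ijq => [|[i' j'] q] le_qn p'_ijq.
    by apply: Or31; exists i; rewrite /= gmul1g !gmulg1 in p'_ijq.
  apply: IHrot ((i + i', j') :: q) _ _; first exact: le_qn.
  by rewrite -alt_word_merge_a.
Qed.

Lemma free_product_conj_normal_form w : conj_normal_form w.
Proof. by have [p ->] := alt_word_surj w; apply: alt_word_conj_normal_form. Qed.

End NormalForm.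

Import GRing.Theory Num.Theory.
Local Open Scope ring_scope.

(** * Representations by 2 x 2 matrices *)

Lemma normal_subgroup_conjugate (G : group) (N : G -> Prop) (x y : G) :
  is_normal_subgroup G N -> conjugate x y -> N y -> N x.
Proof. by move=> [_ [_ [_ Nconj]]] [g ->] /(Nconj (ginv g)); rewrite ginvK. Qed.

Lemma normal_subgroup_preimage (G H : group) (f : G -> H) (N : H -> Prop) :
  is_hom G H f -> is_normal_subgroup H N -> is_normal_subgroup G (fun x => N (f x)).
Proof.
move=> f_hom [N1 [NM [NV Nconj]]]; split; first by rewrite (hom1 f_hom).
split; first by move=> x y Nx Ny; rewrite f_hom; apply: NM.
split; first by move=> x Nx; rewrite (homV f_hom); apply: NV.
by move=> g x Nx; rewrite !f_hom (homV f_hom); apply: Nconj.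
Qed.

Lemma hom_not_normal_closure (G H : group) (f : G -> H) (N : H -> Prop) (x z : G) :
  is_hom G H f -> is_normal_subgroup H N -> N (f x) -> ~ N (f z) ->
  ~ normal_closure G x z.
Proof. by move=> f_hom N_normal Nfx Nfz /(_ _ (normal_subgroup_preimage f_hom N_normal) Nfx). Qed.

Section UnitGroup.

Variable R : unitRingType.

Let unit_eq (x y : {x : R | x \is a GRing.unit}) : sval x = sval y -> x = y.
Proof. by apply: eq_sig_hprop => ? ? ?; apply: eq_irrelevance. Qed.

Let unitM (x y : {x : R | x \is a GRing.unit}) : sval x * sval y \is a GRing.unit.
Proof. by rewrite unitrMl (svalP x, svalP y). Qed.

Let unitV (x : {x : R | x \is a GRing.unit}) : (sval x)^-1 \is a GRing.unit.
Proof. by rewrite unitrV (svalP x). Qed.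

Definition unit_group : group.
refine (@Group {x : R | x \is a GRing.unit}
  (fun x y => exist _ (sval x * sval y) (unitM x y)) (exist _ 1 (@unitr1 R))
  (fun x => exist _ (sval x)^-1 (unitV x)) _ _ _).
- by move=> x y z; apply: unit_eq; apply: mulrA.
- by move=> x; apply: unit_eq; apply: mul1r.
- by move=> x; apply: unit_eq; apply: mulVr (svalP x).
Defined.

Lemma unit_group_inj (x y : unit_group) : sval x = sval y -> x = y.
Proof. exact: unit_eq. Qed.

Lemma unit_group_gpow (x : unit_group) n : sval (gpow x n) = sval x ^+ n.
Proof. by elim: n => //= n ->; rewrite exprS. Qed.

Lemma unit_of_order n (x : R) : (0 < n)%N -> x ^+ n = 1 -> x \is a GRing.unit.
Proof.
by case: n => // n _ xn1; apply/unitrP; exists (x ^+ n); rewrite -exprS -exprSr.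
Qed.

End UnitGroup.

Lemma free_product_unit_hom s t (G : group) (a b : G) (R : unitRingType) (x y : R) :
  is_free_product_cyclic s t G a b -> (0 < s)%N -> (0 < t)%N -> x ^+ s = 1 -> y ^+ t = 1 ->
  exists f : G -> unit_group R, [/\ is_hom G _ f, sval (f a) = x & sval (f b) = y].
Proof.
move=> [_ [_ univ]] s_gt0 t_gt0 xs1 yt1.
pose x' : unit_group R := exist _ x (unit_of_order s_gt0 xs1).
pose y' : unit_group R := exist _ y (unit_of_order t_gt0 yt1).
have x's1 : gpow x' s = gone by apply: unit_group_inj; rewrite unit_group_gpow.
have y't1 : gpow y' t = gone by apply: unit_group_inj; rewrite unit_group_gpow.
have [[f [f_hom [fa fb]]] _] := univ _ x' y' x's1 y't1.
by exists f; rewrite fa fb.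
Qed.

Definition scalar_unit (R : comUnitRingType) n (x : unit_group 'M[R]_n.+1) :=
  exists k, sval x = k%:M.

Lemma scalar_unit_normal (R : comUnitRingType) n :
  is_normal_subgroup _ (@scalar_unit R n).
Proof.
split; first by exists 1.
split; first by move=> x y [k xk] [l yl]; exists (k * l); rewrite /= xk yl scalar_mxM.
split; first by move=> x [k xk]; exists k^-1; rewrite /= xk -invmx_scalar.
move=> g x [k xk]; exists k.
by rewrite /= xk -mulmxE -scalar_mxC mulmxA mulmxE (mulVr (svalP g)) mul1r.
Qed.

Section TwoByTwo.

Variable R : comNzRingType.

Definition mx2 (p q u v : R) : 'M[R]_2 :=
  \matrix_(i, j) if val i == 0%N then (if val j == 0%N then p else q)
                 else (if val j == 0%N then u else v).

Lemma mx2_eta (M : 'M[R]_2) : M = mx2 (M 0 0) (M 0 1) (M 1 0) (M 1 1).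
Proof.
by apply/matrixP => -[[|[|//]] ?] [[|[|//]] ?]; rewrite mxE /=; congr (M _ _); apply: val_inj.
Qed.

Lemma mx2_inj p q u v p' q' u' v' :
  mx2 p q u v = mx2 p' q' u' v' -> [/\ p = p', q = q', u = u' & v = v'].
Proof.
move=> /matrixP e.
by split; [move: (e 0 0) | move: (e 0 1) | move: (e 1 0) | move: (e 1 1)]; rewrite !mxE.
Qed.

Lemma mulmx2 p q u v p' q' u' v' :
  mx2 p q u v * mx2 p' q' u' v' =
  mx2 (p * p' + q * u') (p * q' + q * v') (u * p' + v * u') (u * q' + v * v').
Proof.
rewrite -mulmxE; apply/matrixP => i j.
by rewrite !mxE !big_ord_recr big_ord0 /= !mxE add0r; case: ifP; case: ifP.
Qed.

Lemma scalar_mx2 k : k%:M = mx2 k 0 0 k.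
Proof. by apply/matrixP => -[[|[|//]] ?] [[|[|//]] ?]; rewrite !mxE. Qed.

Lemma det_mx2 p q u v : \det (mx2 p q u v) = p * v - q * u.
Proof.
rewrite (expand_det_row _ 0) !big_ord_recr big_ord0 /= add0r /cofactor !det_mx11 !mxE /=.
ring.
Qed.

Lemma mxtrace_mx2 p q u v : \tr (mx2 p q u v) = p + v.
Proof. by rewrite /mxtrace !big_ord_recr big_ord0 /= add0r !mxE. Qed.

Lemma mxtrace2 (M : 'M[R]_2) : \tr M = M 0 0 + M 1 1.
Proof. by rewrite {1}[M]mx2_eta mxtrace_mx2. Qed.

Lemma mx2_cayley_hamilton (M : 'M[R]_2) : M * M = \tr M *: M - (\det M)%:M.
Proof.
rewrite [M]mx2_eta; move: (M 0 0) (M 0 1) (M 1 0) (M 1 1) => p q u v.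
rewrite mulmx2 mxtrace_mx2 det_mx2.
by apply/matrixP => -[[|[|//]] ?] [[|[|//]] ?]; rewrite !mxE /=; ring.
Qed.

Lemma scalar_mx_shiftB n (A : 'M[R]_n) a b : A - b%:M - (A - a%:M) = (a - b)%:M.
Proof. by rewrite opprB addrC addrA subrK raddfB. Qed.

Lemma mx2_mul_eigen (M : 'M[R]_2) e1 e2 : e1 + e2 = \tr M -> e1 * e2 = \det M ->
  M * (M - e2%:M) = e1 *: (M - e2%:M).
Proof.
move=> trM detM; rewrite mulrBr mx2_cayley_hamilton -trM -detM -mulmxE mul_mx_scalar.
by rewrite scalerBr scale_scalar_mx scalerDl addrAC addrK.
Qed.

Lemma mx2_expr_eigen (M : 'M[R]_2) e1 e2 n : e1 + e2 = \tr M -> e1 * e2 = \det M ->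
  (e1 - e2) *: M ^+ n = e1 ^+ n *: (M - e2%:M) - e2 ^+ n *: (M - e1%:M).
Proof.
move=> trM detM; elim: n => [|n IHn].
  by rewrite !expr0 !scale1r scalar_mx_shiftB scalemx1.
have mul_eigen' : M * (M - e1%:M) = e2 *: (M - e1%:M).
  by apply: mx2_mul_eigen; rewrite (addrC, mulrC).
rewrite exprS scalerAr IHn mulrBr -!scalerAr (mx2_mul_eigen trM detM) mul_eigen'.
by rewrite !scalerA -!exprSr.
Qed.

End TwoByTwo.

Lemma mx2_expr_scalar (F : fieldType) (M : 'M[F]_2) e1 e2 n :
  e1 + e2 = \tr M -> e1 * e2 = \det M -> e1 != e2 -> e1 ^+ n = e2 ^+ n ->
  M ^+ n = (e1 ^+ n)%:M.
Proof.
move=> trM detM e12 en; have e12' : e1 - e2 != 0 by rewrite subr_eq0.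
apply: (scalerI e12'); rewrite mx2_expr_eigen // -en -scalerBr scalar_mx_shiftB.
by rewrite !scale_scalar_mx mulrC.
Qed.

Definition alt_prod (R : pzSemiRingType) (x y : R) (p : seq (nat * nat)) :=
  \prod_(ij <- p) (x ^+ ij.1 * y ^+ ij.2).

Lemma rmorph_alt_prod (R S : pzSemiRingType) (f : {rmorphism R -> S}) x y p :
  f (alt_prod x y p) = alt_prod (f x) (f y) p.
Proof. by rewrite rmorph_prod; apply: eq_bigr => ij _; rewrite rmorphM !rmorphXn. Qed.

Section Representation.

Variable R : comNzRingType.

Definition Amx (c : R) := mx2 1 1 0 c.
Definition Bmx (d x : R) := mx2 d 0 x 1.

Lemma Amx_expr c n : Amx c ^+ n = mx2 1 (\sum_(k < n) c ^+ k) 0 (c ^+ n).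
Proof.
elim: n => [|n IHn]; first by rewrite expr0 big_ord0 -scalar_mx2.
by rewrite exprS IHn mulmx2 big_ord_recr exprS /=; congr mx2; ring.
Qed.

Lemma Bmx_expr d x n : Bmx d x ^+ n = mx2 (d ^+ n) 0 (x * \sum_(k < n) d ^+ k) 1.
Proof.
elim: n => [|n IHn]; first by rewrite expr0 big_ord0 mulr0 -scalar_mx2.
by rewrite exprS IHn mulmx2 big_ord_recr exprS /=; congr mx2; ring.
Qed.

Lemma det_mx_expr (M : 'M[R]_2) n : \det (M ^+ n) = \det M ^+ n.
Proof. by elim: n => [|n IHn]; rewrite ?det1 // !exprS det_mulmx IHn. Qed.

Lemma det_alt_prod (A B : 'M[R]_2) p :
  \det (alt_prod A B p) = \prod_(ij <- p) (\det A ^+ ij.1 * \det B ^+ ij.2).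
Proof.
elim: p => [|ij p IHp]; first by rewrite /alt_prod !big_nil det1.
by rewrite /alt_prod !big_cons !det_mulmx -IHp !det_mx_expr.
Qed.

Lemma det_alt_prod_AB c d x p :
  \det (alt_prod (Amx c) (Bmx d x) p) = \prod_(ij <- p) (c ^+ ij.1 * d ^+ ij.2).
Proof.
rewrite det_alt_prod /Amx /Bmx !det_mx2.
by apply: eq_bigr => ij _; congr (_ ^+ _ * _ ^+ _); ring.
Qed.

End Representation.

Lemma map_mx2 (R S : comNzRingType) (f : R -> S) p q u v :
  map_mx f (mx2 p q u v) = mx2 (f p) (f q) (f u) (f v).
Proof. by apply/matrixP => i j; rewrite !mxE; case: ifP; case: ifP. Qed.

(** * Degree of the trace *)

Section PolyMatrixDegree.

Variable F : idomainType.

(* Sizes (degree + 1) of the entries of a product of [k] factors of the form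
   [Amx c%:P ^+ i * Bmx d%:P 'X ^+ j] with nonzero geometric sums: the top-left
   entry has degree exactly [k], so the trace does too. *)
Definition deg_shape k (M : 'M[{poly F}]_2) :=
  [&& size (M 0 0) == k.+1, leq (size (M 0 1)) k, leq (size (M 1 0)) k.+1
    & leq (size (M 1 1)) k.+1].

Lemma deg_shape1 : deg_shape 0 1.
Proof. by rewrite /deg_shape !mxE /= size_polyC oner_neq0 size_poly0. Qed.

Lemma size_mul_leq_add (x y : {poly F}) m n :
  leq (size x) m.+1 -> leq (size y) n -> leq (size (x * y)) (m + n).
Proof.
move=> xm yn; apply: leq_trans (size_polyMleq x y) _.
by rewrite -subn1 leq_subLR add1n; apply: leq_add xm yn.
Qed.

Lemma deg_shape_step (x00 x01 x10 x11 : {poly F}) k M :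
  size x00 = 2%N -> leq (size x01) 1 -> leq (size x10) 2 -> leq (size x11) 1 ->
  deg_shape k M ->
  deg_shape k.+1 (mx2 x00 x01 x10 x11 * M) /\
  leq (size ((mx2 x00 x01 x10 x11 * M) 1 1)) k.+1.
Proof.
move=> s00 s01 s10 s11.
rewrite [M]mx2_eta; move: (M 0 0) (M 0 1) (M 1 0) (M 1 1) => p q u v.
rewrite /deg_shape mulmx2 !mxE /= => /and4P [/eqP sp sq su sv].
have sizeD (y z : {poly F}) n : leq (size y) n -> leq (size z) n -> leq (size (y + z)) n.
  by move=> yn zn; apply: leq_trans (size_polyD y z) _; rewrite geq_max yn zn.
have x00_0 : x00 != 0 by rewrite -size_poly_eq0 s00.
have p0 : p != 0 by rewrite -size_poly_eq0 sp.
have N00 : size (x00 * p + x01 * u) = k.+2.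
  have sizep : size (x00 * p) = k.+2 by rewrite size_mul // s00 sp.
  by rewrite size_polyDl sizep // ltnS; apply: size_mul_leq_add s01 su.
have N01 : leq (size (x00 * q + x01 * v)) k.+1.
  apply: sizeD; first exact: size_mul_leq_add (eq_leq s00) sq.
  exact: size_mul_leq_add s01 sv.
have N10 : leq (size (x10 * p + x11 * u)) k.+2.
  apply: sizeD; first exact: size_mul_leq_add s10 (eq_leq sp).
  exact: leqW (size_mul_leq_add s11 su).
have N11 : leq (size (x10 * q + x11 * v)) k.+1.
  by apply: sizeD; [apply: size_mul_leq_add s10 sq | apply: size_mul_leq_add s11 sv].
split; last exact: N11.
by apply/and4P; split; [by rewrite N00 | exact: N01 | exact: N10 | exact: leqW N11].
Qed.

End PolyMatrixDegree.

Section TracePolynomial.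

Variables (F : idomainType) (c d : F).

Let gc i := \sum_(k < i) c ^+ k.
Let gd j := \sum_(k < j) d ^+ k.

Lemma polyC_geom (x : F) n : (\sum_(k < n) x ^+ k)%:P = \sum_(k < n) x%:P ^+ k.
Proof. by rewrite rmorph_sum; apply: eq_bigr => k _; rewrite rmorphXn. Qed.

Lemma ABmx_poly_expr i j :
  Amx c%:P ^+ i * Bmx d%:P 'X ^+ j =
  mx2 ((d ^+ j)%:P + (gc i * gd j) *: 'X) (gc i)%:P ((c ^+ i * gd j) *: 'X) (c ^+ i)%:P.
Proof.
rewrite Amx_expr Bmx_expr mulmx2 -!mul_polyC !polyCM !polyC_exp /gc /gd !polyC_geom.
by congr mx2; ring.
Qed.

Lemma deg_shape_ABmx_mul i j k M : gc i != 0 -> gd j != 0 -> deg_shape k M ->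
  deg_shape k.+1 (Amx c%:P ^+ i * Bmx d%:P 'X ^+ j * M) /\
  leq (size ((Amx c%:P ^+ i * Bmx d%:P 'X ^+ j * M) 1 1)) k.+1.
Proof.
move=> ci dj; rewrite ABmx_poly_expr; apply: deg_shape_step; rewrite ?size_polyC_leq1 //.
  rewrite addrC size_polyDl size_scale ?mulf_neq0 ?size_polyX //.
  exact: leq_ltn_trans (size_polyC_leq1 _) _.
by rewrite (leq_trans (size_scale_leq _ _)) ?size_polyX.
Qed.

Lemma size_trace_alt_prod p :
  p != [::] -> all (fun ij => (gc ij.1 != 0) && (gd ij.2 != 0)) p ->
  size (\tr (alt_prod (Amx c%:P) (Bmx d%:P 'X) p)) = (size p).+1.
Proof.
have shape q : all (fun ij => (gc ij.1 != 0) && (gd ij.2 != 0)) q ->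
    deg_shape (size q) (alt_prod (Amx c%:P) (Bmx d%:P 'X) q).
  elim: q => [|[i j] q IHq]; first by rewrite /alt_prod big_nil deg_shape1.
  move=> /= /andP [/andP [ci dj] /IHq shape_q]; rewrite /alt_prod big_cons.
  exact: (deg_shape_ABmx_mul ci dj shape_q).1.
case: p => // -[i j] q _ /= /andP [/andP [ci dj] /shape shape_q].
have [/and4P [/eqP s00 _ _ _] s11] := deg_shape_ABmx_mul ci dj shape_q.
by rewrite /alt_prod big_cons mxtrace2 size_polyDl s00 // ltnS.
Qed.

End TracePolynomial.

Lemma unit_hom_alt_word (G : group) (a b : G) (R : unitRingType)
    (f : G -> unit_group R) p :
  is_hom G _ f -> sval (f (alt_word a b p)) = alt_prod (sval (f a)) (sval (f b)) p.
Proof.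
move=> f_hom; elim: p => [|[i j] p IHp]; first by rewrite /alt_prod big_nil (hom1 f_hom).
by rewrite /alt_prod big_cons /= !f_hom !(homX f_hom) /= !unit_group_gpow IHp mulrA.
Qed.

Lemma prim_root_neq0 (F : idomainType) n (z : F) : (0 < n)%N -> n.-primitive_root z -> z != 0.
Proof. by move=> n_gt0 zn; rewrite (prim_root_eq0 zn) -lt0n. Qed.

Lemma prim_root_neq1 (F : idomainType) n (z : F) : (1 < n)%N -> n.-primitive_root z -> z != 1.
Proof. by move=> n_gt1 zn; rewrite -[z]expr1 -(prim_order_dvd zn) dvdn1 gtn_eqF. Qed.

Lemma prim_root_geom_eq0 (F : idomainType) n (z : F) i : (1 < n)%N -> n.-primitive_root z ->
  (\sum_(k < i) z ^+ k == 0) = (n %| i)%N.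
Proof.
move=> n_gt1 zn; have z1 : z - 1 != 0 by rewrite subr_eq0 (prim_root_neq1 n_gt1).
by rewrite (prim_order_dvd zn) -[RHS]subr_eq0 subrX1 mulf_eq0 (negbTE z1).
Qed.

Lemma Amx_prim_root (F : idomainType) (c : F) n : (1 < n)%N -> n.-primitive_root c ->
  Amx c ^+ n = 1.
Proof.
move=> n_gt1 cn; have /eqP geom0 : \sum_(k < n) c ^+ k == 0.
  by rewrite (prim_root_geom_eq0 _ n_gt1).
by rewrite Amx_expr geom0 (prim_expr_order cn) -scalar_mx2.
Qed.

Lemma Bmx_prim_root (F : idomainType) (d x : F) n : (1 < n)%N -> n.-primitive_root d ->
  Bmx d x ^+ n = 1.
Proof.
move=> n_gt1 dn; have /eqP geom0 : \sum_(k < n) d ^+ k == 0.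
  by rewrite (prim_root_geom_eq0 _ n_gt1).
by rewrite Bmx_expr geom0 mulr0 (prim_expr_order dn) -scalar_mx2.
Qed.

Lemma Amx_nonscalar (R : comNzRingType) (c k : R) : Amx c != k%:M.
Proof. by apply/eqP; rewrite scalar_mx2 => /mx2_inj [_ /eqP]; rewrite oner_eq0. Qed.

Lemma Bmx_nonscalar (R : comNzRingType) (d k : R) : d != 1 -> Bmx d 0 != k%:M.
Proof.
by move=> d1; apply/eqP; rewrite scalar_mx2 => /mx2_inj [dk _ _ k1]; rewrite dk k1 eqxx in d1.
Qed.

Lemma closed_poly_surj (F : closedFieldType) (T : {poly F}) c :
  (1 < size T)%N -> exists x, T.[x] = c.
Proof.
move=> T_gt1; have : size (T - c%:P) != 1%N.
  by rewrite size_polyDl ?size_polyN ?gtn_eqF // (leq_ltn_trans (size_polyC_leq1 _)).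
by case/closed_rootP => x /rootP; rewrite !hornerE => /eqP; rewrite subr_eq0 => /eqP; exists x.
Qed.

(** * Separating w^r from a generator *)

Definition scalar_separated (G : group) (x z : G) :=
  exists f : G -> unit_group 'M[algC]_2,
    [/\ is_hom G _ f, scalar_unit (f x) & ~ scalar_unit (f z)].

Lemma scalar_separated_not_normal_closure (G : group) (x z : G) :
  scalar_separated x z -> ~ normal_closure G x z.
Proof.
by move=> [f [f_hom fx fz]]; apply: hom_not_normal_closure f_hom (scalar_unit_normal _ _) fx fz.
Qed.

Lemma scalar_separated_conjugate (G : group) (x y z : G) :
  conjugate x y -> scalar_separated y z -> scalar_separated x z.
Proof.
move=> xy [f [f_hom fy fz]]; exists f; split=> //.
have Nf := normal_subgroup_preimage f_hom (scalar_unit_normal _ _).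
exact: normal_subgroup_conjugate Nf xy fy.
Qed.

Section Separation.

Variables (s t r : nat) (G : group) (a b : G).
Hypotheses (s_gt1 : (1 < s)%N) (t_gt1 : (1 < t)%N) (r_gt1 : (1 < r)%N).
Hypothesis freeG : is_free_product_cyclic s t G a b.
Variables (lam mu : algC).
Hypotheses (lam_prim : s.-primitive_root lam) (mu_prim : t.-primitive_root mu).

Let s_gt0 := ltnW s_gt1.
Let t_gt0 := ltnW t_gt1.
Let lam0 := prim_root_neq0 s_gt0 lam_prim.
Let mu0 := prim_root_neq0 t_gt0 mu_prim.

Lemma gpow_a_separated i : scalar_separated (gpow (gpow a i) r) b.
Proof.
have [f [f_hom fa fb]] := free_product_unit_hom freeG s_gt0 t_gt0
  (expr1n _ s) (Bmx_prim_root 0 t_gt1 mu_prim).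
exists f; split=> //.
  by exists 1; rewrite !(homX f_hom) !unit_group_gpow fa !expr1n.
by move=> [k]; rewrite fb; apply/eqP/Bmx_nonscalar/(prim_root_neq1 t_gt1).
Qed.

Lemma gpow_b_separated j : scalar_separated (gpow (gpow b j) r) a.
Proof.
have [f [f_hom fa fb]] := free_product_unit_hom freeG s_gt0 t_gt0
  (Amx_prim_root s_gt1 lam_prim) (expr1n _ t).
exists f; split=> //.
  by exists 1; rewrite !(homX f_hom) !unit_group_gpow fb !expr1n.
by move=> [k]; rewrite fa; apply/eqP/Amx_nonscalar.
Qed.

Lemma alt_word_separated p : p != [::] -> reduced_pairs s t p ->
  scalar_separated (gpow (alt_word a b p) r) a.
Proof.
move=> p_nil p_red.
have [zeta zeta_prim] := C_prim_root_exists (ltnW r_gt1).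
have zeta1 := prim_root_neq1 r_gt1 zeta_prim.
have zeta0 := prim_root_neq0 (ltnW r_gt1) zeta_prim.
pose D := \prod_(ij <- p) (lam ^+ ij.1 * mu ^+ ij.2).
have D0 : D != 0.
  by rewrite prodf_seq_neq0; apply/allP => ij _; rewrite mulf_neq0 // expf_neq0.
(* [e] and [zeta * e] are to be the eigenvalues of the image of the word. *)
pose e := sqrtC (D / zeta).
have De : e * (zeta * e) = D by rewrite mulrCA -expr2 sqrtCK mulrC divfK.
pose T := \tr (alt_prod (Amx lam%:P) (Bmx mu%:P 'X) p).
have sizeT : size T = (size p).+1.
  apply: size_trace_alt_prod => //; apply/allP => -[i j] /(allP p_red).
  case/andP => /andP [i_gt0 i_lt] /andP [j_gt0 j_lt].
  by rewrite (prim_root_geom_eq0 _ s_gt1) ?(prim_root_geom_eq0 _ t_gt1) ?gtnNdvd.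
have [x Tx] : exists x, T.[x] = (1 + zeta) * e.
  by apply: closed_poly_surj; rewrite sizeT ltnS lt0n size_eq0.
have [f [f_hom fa fb]] := free_product_unit_hom freeG s_gt0 t_gt0
  (Amx_prim_root s_gt1 lam_prim) (Bmx_prim_root x t_gt1 mu_prim).
exists f; split=> //; last by move=> [k]; rewrite fa; apply/eqP/Amx_nonscalar.
pose M := alt_prod (Amx lam) (Bmx mu x) p.
have fu : sval (f (alt_word a b p)) = M by rewrite (unit_hom_alt_word _ _ _ f_hom) fa fb.
have trM : e + zeta * e = \tr M.
  have -> : M = map_mx (horner_eval x) (alt_prod (Amx lam%:P) (Bmx mu%:P 'X) p).
    by rewrite rmorph_alt_prod /= /Amx /Bmx !map_mx2 !horner_evalE !hornerE.
  by rewrite trace_map_mx /= horner_evalE -/T Tx mulrDl mul1r.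
have detM : e * (zeta * e) = \det M by rewrite det_alt_prod_AB.
exists (e ^+ r); rewrite (homX f_hom) unit_group_gpow fu.
apply: mx2_expr_scalar trM detM _ _; last by rewrite exprMn (prim_expr_order zeta_prim) mul1r.
have e0 : e != 0 by apply: contraNneq D0 => e0; rewrite -De e0 mul0r.
by apply: contra_neq zeta1 => eze; apply: (mulIf e0); rewrite mul1r -eze.
Qed.

Lemma gpow_separated (w : G) : exists z, scalar_separated (gpow w r) z.
Proof.
have [[i wi] | [j wj] | [p [p_nil p_red wp]]] := free_product_conj_normal_form s_gt0 t_gt0 freeG w.
- by exists b; apply: scalar_separated_conjugate (conjugate_gpow r wi) (gpow_a_separated i).
- by exists a; apply: scalar_separated_conjugate (conjugate_gpow r wj) (gpow_b_separated j).
- exists a; apply: scalar_separated_conjugate (conjugate_gpow r wp) _.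
  exact: alt_word_separated p_nil p_red.
Qed.

End Separation.

Theorem mainTheorem18 (s t r : nat) (hs : (1 < s)%coq_nat) (ht : (1 < t)%coq_nat)
  (hr : (1 < r)%coq_nat)
  (G : group) (a b : G) (hG : is_free_product_cyclic s t G a b) (w : G) :
  exists z : G, ~ normal_closure G (gpow w r) z.
Proof.
move/ltP: hs => s_gt1; move/ltP: ht => t_gt1; move/ltP: hr => r_gt1.
have [lam lam_prim] := C_prim_root_exists (ltnW s_gt1).
have [mu mu_prim] := C_prim_root_exists (ltnW t_gt1).
have [z sep] := gpow_separated s_gt1 t_gt1 r_gt1 hG lam_prim mu_prim w.
by exists z; apply: scalar_separated_not_normal_closure.
Qed.
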